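(* Let $\mathbb{A}$ be a medial algebra over a field of characteristic not $2,3$ and let $c$ be a nonzero idempotent with $L_c$ invertible. Define on the vector space $\mathbb{A}$ the new multiplication $x\circ y=L_c^{-1}(xy)$. Then $(\mathbb{A},\circ)$ is a unital commutative associative algebra.
   Context: All algebras are commutative, possibly nonassociative, finite-dimensional. Medial: $(xy)(zw)=(xz)(yw)$ identically. $L_c:x\mapsto cx$. *)

From HB Require Import structures.
From mathcomp Require Import all_boot all_order all_algebra.
Set Implicit Arguments. Unset Strict Implicit. Unset Printing Implicit Defensive.
Import GRing.Theory.
Local Open Scope ring_scope.

Definition bilinear_mul (K : fieldType) (V : lmodType K) (m : V -> V -> V) : Prop :=
  (forall (a : K) (x y z : V), m (a *: x + y) z = a *: m x z + m y z) /\
  (forall (a : K) (x y z : V), m x (a *: y + z) = a *: m x y + m x z).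

Definition medial (T : Type) (m : T -> T -> T) : Prop :=
  forall x y z w, m (m x y) (m z w) = m (m x z) (m y w).

From HB Require Import structures.
From mathcomp Require Import all_boot all_order all_algebra.
Set Implicit Arguments.
Unset Strict Implicit.
Import GRing.Theory.
Local Open Scope ring_scope.

(* Idea: c is idempotent, so mediality gives c(uz) = (cc)(uz) = (cu)(cz), i.e.
   L_c(uz) = L_c(u) L_c(z).  Taking u = x o y turns L_c((x o y) z) into (xy)(cz),
   and symmetrically L_c(x (y o z)) = (cx)(yz); these agree by mediality and
   commutativity, so o is associative.  Moreover c o x = L_c^{-1}(cx) = x. *)

Definition isotope_mul (T : Type) (mul : T -> T -> T) (f : T -> T) (x y : T) : T :=
  f (mul x y).

Section MedialIsotope.

Variables (T : Type) (mul : T -> T -> T).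
Hypotheses (mulC : commutative mul) (mul_medial : medial mul).
Variables (c : T) (Lcinv : T -> T).
Hypotheses (mulcc : mul c c = c)
  (mulcK : cancel (mul c) Lcinv) (LcinvK : cancel Lcinv (mul c)).

Local Notation circ := (isotope_mul mul Lcinv).

Lemma mulc_is_multiplicative u z : mul c (mul u z) = mul (mul c u) (mul c z).
Proof. by rewrite -{1}mulcc mul_medial. Qed.

Lemma mulc_mul_circl x y z : mul c (mul (circ x y) z) = mul (mul x y) (mul c z).
Proof. by rewrite mulc_is_multiplicative /isotope_mul LcinvK. Qed.

Lemma mulc_mul_circr x y z : mul c (mul x (circ y z)) = mul (mul c x) (mul y z).
Proof. by rewrite mulc_is_multiplicative /isotope_mul LcinvK. Qed.

Lemma isotope_mulC : commutative circ.
Proof. by move=> x y; rewrite /isotope_mul mulC. Qed.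

Lemma isotope_mulA : associative circ.
Proof.
move=> x y z; congr Lcinv; apply: (can_inj mulcK).
by rewrite mulc_mul_circl mulc_mul_circr [RHS]mul_medial (mulC x c).
Qed.

Lemma isotope_mul1r : left_id c circ.
Proof. exact: mulcK. Qed.

Lemma isotope_mulr1 : right_id c circ.
Proof. by move=> x; rewrite isotope_mulC isotope_mul1r. Qed.

End MedialIsotope.

Section Bilinear.

Variables (K : fieldType) (V : lmodType K).

Lemma can2_linear_mul (mul : V -> V -> V) (c : V) (f : V -> V) :
  bilinear_mul mul -> cancel (mul c) f -> cancel f (mul c) ->
  forall (a : K) u v, f (a *: u + v) = a *: f u + f v.
Proof.
move=> [_ mulrDr] mulcK fK a u v.
by rewrite -{1}(fK u) -{1}(fK v) -mulrDr mulcK.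
Qed.

Lemma bilinear_isotope_mul (mul : V -> V -> V) (f : V -> V) :
  (forall (a : K) u v, f (a *: u + v) = a *: f u + f v) ->
  bilinear_mul mul -> bilinear_mul (isotope_mul mul f).
Proof.
move=> f_lin [mulDl mulDr]; split=> a x y z; rewrite /isotope_mul.
- by rewrite mulDl f_lin.
- by rewrite mulDr f_lin.
Qed.

End Bilinear.

Theorem proposition3p9 (K : fieldType) (V : vectType K) (mul : V -> V -> V)
  (hK2 : 2%N \notin [pchar K]) (hK3 : 3%N \notin [pchar K])
  (hbil : bilinear_mul mul) (hcomm : commutative mul) (hmed : medial mul)
  (c : V) (hc0 : c != 0) (hcc : mul c c = c)
  (Lcinv : V -> V) (hinv1 : cancel (mul c) Lcinv) (hinv2 : cancel Lcinv (mul c)) :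
  let circ := fun x y => Lcinv (mul x y) in
  [/\ bilinear_mul circ, commutative circ, associative circ
    & exists e : V, forall x, circ e x = x /\ circ x e = x].
Proof.
move=> circ; split.
- exact/bilinear_isotope_mul/hbil/(can2_linear_mul hbil hinv1 hinv2).
- exact: isotope_mulC.
- exact: (isotope_mulA hcomm hmed hcc hinv1 hinv2).
- exists c => x; split.
  + exact: (isotope_mul1r hinv1).
  + exact: (isotope_mulr1 hcomm hinv1).
Qed.
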